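(* Let $m$ be a positive integer and suppose that complex numbers $c_0,c_1,\dots,c_{2m+1}$ satisfy, identically as meromorphic functions of $s\in\mathbb{C}$, $$c_{2m+1}\zeta(-2m-1,s+2m+1)+\cdots+c_1\zeta(-1,s+1)+c_0\,\zeta(0,s)/2\equiv0.$$ Then $c_0+c_1+c_2+\cdots+c_{2m+1}=0$.
   Context: For an integer $c\ge 0$, $\zeta(-c,s+c)$ denotes the Euler–Zagier double zeta function $\zeta(s_1,s_2)=\sum_{1\le n_1<n_2} n_1^{-s_1}n_2^{-s_2}$ evaluated at $(s_1,s_2)=(-c,s+c)$; i.e. it is the meromorphic continuation to all $s\in\mathbb{C}$ of the series $\sum_{m,n\ge1} m^{c}(m+n)^{-s-c}$, which converges absolutely for $\Re(s)>2$. *)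

From Stdlib Require Import Reals.
From Coquelicot Require Import Coquelicot.
Open Scope R_scope.

(* n^{-s} := exp(-s log n) for a positive integer n and complex s. *)
Definition npow_neg (n : nat) (s : Complex.C) : Complex.C :=
  let t := ln (INR n) in
  (exp (- Re s * t) * cos (- Im s * t), exp (- Re s * t) * sin (- Im s * t)).

(* Value of a complex series, taken componentwise (Coquelicot's Series is real). *)
Definition CSeries (a : nat -> Complex.C) : Complex.C :=
  (Series (fun k => Re (a k)), Series (fun k => Im (a k))).

(* Terms of sum_{m,n>=1} m^c (m+n)^{-s-c}, grouped by N = m + n:
   the N-th term is sum_{m=1}^{N-1} m^c N^{-(s+c)} (empty for N <= 1). *)
Definition dz_term (c : nat) (s : Complex.C) (N : nat) : Complex.C :=
  Cmult (sum_n (fun m => if (1 <=? m)%nat then RtoC (INR m ^ c) else RtoC 0) (N - 1)%nat)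
        (npow_neg N (Cplus s (RtoC (INR c)))).

(* zeta(-c, s+c) for Re s > 2, where the double series converges absolutely. *)
Definition dzeta (c : nat) (s : Complex.C) : Complex.C :=
  CSeries (dz_term c s).

From Stdlib Require Import Reals Lra Lia Psatz Wf_nat.
From Coquelicot Require Import Coquelicot.
Open Scope R_scope.

(* Evaluating the hypothesis at the integers s >= 3 gives, separately for the
   real and the imaginary parts of the c_k, a vanishing Dirichlet series
   sum_N F(N) N^(-s) with F(N) = sum_k w_k N^(-k) sum_(1 <= j < N) j^k, where
   w_k = c_k for k >= 1 and w_0 = c_0 / 2.  Uniqueness of Dirichlet coefficients
   forces F = 0.  On the other hand, comparing the power sum with the trapezoid
   rule for x^k gives N^(-k) sum_(j < N) j^k = N / (k + 1) - 1/2 + O(1/N) for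
   k >= 1 (and N - 1 for k = 0), so F(N) = A N + B + O(1/N) with
   B = -(c_0 + ... + c_(2m+1)) / 2, and F = 0 forces B = 0. *)

Lemma sum_n_succ (a : nat -> R) (n : nat) : sum_n a (S n) = sum_n a n + a (S n).
Proof. now rewrite sum_Sn. Qed.

(** * Power sums *)

(* The guard excluding j = 0 only matters for k = 0, where 0 ^ 0 = 1. *)
Definition power_sum (k N : nat) : R :=
  sum_n (fun j => if (1 <=? j)%nat then INR j ^ k else 0) (N - 1).

Lemma power_sum_N0 (k : nat) : power_sum k 0 = 0.
Proof. unfold power_sum. simpl. now rewrite sum_O. Qed.

Lemma power_sum_succ (k N : nat) :
  power_sum k (S N) = power_sum k N + (if (1 <=? N)%nat then INR N ^ k else 0).
Proof.
  unfold power_sum. destruct N as [|N].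
  - simpl. rewrite sum_O. simpl. ring.
  - replace (S (S N) - 1)%nat with (S N) by lia.
    replace (S N - 1)%nat with N by lia.
    apply sum_n_succ.
Qed.

Lemma power_sum_bounds (k N : nat) : 0 <= power_sum k N <= INR N ^ S k.
Proof.
  induction N as [|N IH].
  - rewrite power_sum_N0. simpl. lra.
  - rewrite power_sum_succ, S_INR.
    assert (HN : 0 <= INR N) by apply pos_INR.
    assert (Hk : 0 <= INR N ^ k) by (apply pow_le; lra).
    assert (Hle : INR N ^ k <= (INR N + 1) ^ k) by (apply pow_incr; lra).
    assert (Hif : 0 <= (if (1 <=? N)%nat then INR N ^ k else 0) <= INR N ^ k)
      by (destruct (1 <=? N)%nat; lra).
    simpl pow in *. nra.
Qed.

Lemma power_sum_k0 (N : nat) : (1 <= N)%nat -> power_sum 0 N = INR N - 1.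
Proof.
  induction N as [|N IH]; intros HN; [lia|].
  rewrite power_sum_succ, S_INR. destruct N as [|N].
  - rewrite power_sum_N0. simpl. ring.
  - rewrite IH by lia. simpl. ring.
Qed.

Definition power_sum_ratio (k N : nat) : R := power_sum k N / INR N ^ k.

Lemma power_sum_ratio_bounds (k N : nat) : 0 <= power_sum_ratio k N <= INR N.
Proof.
  unfold power_sum_ratio. destruct (power_sum_bounds k N) as [H0 H1].
  destruct N as [|N].
  - rewrite power_sum_N0. unfold Rdiv. rewrite Rmult_0_l. simpl. lra.
  - assert (HN : 0 < INR (S N) ^ k) by (apply pow_lt, lt_0_INR; lia).
    split; [apply Rdiv_le_0_compat; lra|].
    apply Rle_div_l; [lra|]. rewrite <- tech_pow_Rmult in H1. lra.
Qed.

Lemma pow_succ_sub_bounds (x : R) (k : nat) : 0 <= x ->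
  INR (S k) * x ^ k <= (x + 1) ^ S k - x ^ S k <= INR (S k) * (x + 1) ^ k.
Proof.
  intros Hx. induction k as [|k IH]; [simpl; lra|].
  assert (Hrec : (x + 1) ^ S (S k) - x ^ S (S k)
                 = (x + 1) * ((x + 1) ^ S k - x ^ S k) + x ^ S k) by (simpl; ring).
  assert (Hxk : x ^ S k <= (x + 1) ^ S k) by (apply pow_incr; lra).
  assert (Hlow : (x + 1) * (INR (S k) * x ^ k) <= (x + 1) * ((x + 1) ^ S k - x ^ S k))
    by (apply Rmult_le_compat_l; lra).
  assert (Hup : (x + 1) * ((x + 1) ^ S k - x ^ S k) <= (x + 1) * (INR (S k) * (x + 1) ^ k))
    by (apply Rmult_le_compat_l; lra).
  assert (Hk : 0 <= INR (S k) * x ^ k) by (apply Rmult_le_pos; [apply pos_INR | apply pow_le; lra]).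
  rewrite Hrec, (S_INR (S k)).
  change (x ^ S k) with (x * x ^ k) in *. change ((x + 1) ^ S k) with ((x + 1) * (x + 1) ^ k) in *.
  lra.
Qed.

(* Twice (k + 1) times the error of the trapezoid rule for t ^ k on [x, x + 1]. *)
Definition trapezoid_error (k : nat) (x : R) : R :=
  INR (S k) * (x ^ k + (x + 1) ^ k) - 2 * ((x + 1) ^ S k - x ^ S k).

Lemma trapezoid_error_succ (k : nat) (x : R) :
  trapezoid_error (S k) x =
  ((x + 1) ^ S k - x ^ S k - INR (S k) * x ^ k) + (x + 1) * trapezoid_error k x.
Proof. unfold trapezoid_error. rewrite !S_INR. simpl. ring. Qed.

Lemma trapezoid_error_nonneg (k : nat) (x : R) : 0 <= x -> 0 <= trapezoid_error k x.
Proof.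
  intros Hx. induction k as [|k IH]; [unfold trapezoid_error; simpl; lra|].
  rewrite trapezoid_error_succ.
  pose proof (pow_succ_sub_bounds x k Hx). nra.
Qed.

Lemma trapezoid_error_le (k : nat) :
  exists C, forall x, 0 <= x -> trapezoid_error (S (S k)) x <= C * (x + 1) ^ k.
Proof.
  induction k as [|k [C IH]].
  - exists 1. intros x _. unfold trapezoid_error. simpl. lra.
  - exists (INR (S (S (S k))) * INR (S (S k)) + C). intros x Hx.
    rewrite trapezoid_error_succ.
    destruct (pow_succ_sub_bounds x (S (S k)) Hx) as [_ Hup].
    destruct (pow_succ_sub_bounds x (S k) Hx) as [_ Hup'].
    assert (Hhead : INR (S (S (S k))) * ((x + 1) ^ S (S k) - x ^ S (S k))
                    <= INR (S (S (S k))) * (INR (S (S k)) * (x + 1) ^ S k))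
      by (apply Rmult_le_compat_l; [apply pos_INR | exact Hup']).
    assert (Htail : (x + 1) * trapezoid_error (S (S k)) x <= (x + 1) * (C * (x + 1) ^ k))
      by (apply Rmult_le_compat_l; [lra | exact (IH x Hx)]).
    change ((x + 1) ^ S k) with ((x + 1) * (x + 1) ^ k) in *.
    lra.
Qed.

(* Telescopes into the trapezoid errors on [0, 1], ..., [N - 1, N]. *)
Definition power_sum_defect (k N : nat) : R :=
  INR (S k) * (2 * power_sum k N + INR N ^ k) - 2 * INR N ^ S k.

Lemma power_sum_defect_succ (k N : nat) :
  power_sum_defect (S k) (S N) = power_sum_defect (S k) N + trapezoid_error (S k) (INR N).
Proof.
  unfold power_sum_defect, trapezoid_error.
  rewrite power_sum_succ, (S_INR N).
  replace (if (1 <=? N)%nat then INR N ^ S k else 0) with (INR N ^ S k)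
    by (destruct N; simpl; ring).
  simpl. ring.
Qed.

Lemma power_sum_defect_bounds (k : nat) :
  exists C, forall N, 0 <= power_sum_defect (S k) N <= C * INR N ^ k.
Proof.
  assert (H0 : power_sum_defect (S k) 0 = 0)
    by (unfold power_sum_defect; rewrite power_sum_N0; simpl; ring).
  destruct k as [|k].
  - exists 0. intros N. induction N as [|N IH]; [lra|].
    rewrite power_sum_defect_succ.
    replace (trapezoid_error 1 (INR N)) with 0 by (unfold trapezoid_error; simpl; ring).
    simpl in *. lra.
  - destruct (trapezoid_error_le k) as [C HC]. exists C.
    assert (HC0 : 0 <= C).
    { pose proof (HC 0 (Rle_refl 0)) as H.
      pose proof (trapezoid_error_nonneg (S (S k)) 0 (Rle_refl 0)).
      rewrite Rplus_0_l, pow1 in H. lra. }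
    intros N. induction N as [|N IH]; [simpl; lra|].
    rewrite power_sum_defect_succ, S_INR.
    assert (HN : 0 <= INR N) by apply pos_INR.
    pose proof (trapezoid_error_nonneg (S (S k)) (INR N) HN).
    specialize (HC (INR N) HN).
    assert (Hk : INR N ^ k <= (INR N + 1) ^ k) by (apply pow_incr; lra).
    assert (C * (INR N * INR N ^ k) <= C * (INR N * (INR N + 1) ^ k))
      by (apply Rmult_le_compat_l; [lra | apply Rmult_le_compat_l; lra]).
    simpl pow in *. lra.
Qed.

Definition power_sum_const (k : nat) : R := if (k =? 0)%nat then -1 else - / 2.

Lemma power_sum_asymptotic (k : nat) : exists C, forall N, (1 <= N)%nat ->
  Rabs (power_sum_ratio k N - INR N / INR (S k) - power_sum_const k) <= C / INR N.
Proof.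
  unfold power_sum_ratio, power_sum_const. destruct k as [|k].
  - exists 0. intros N HN. rewrite power_sum_k0 by exact HN. simpl.
    replace ((INR N - 1) / 1 - INR N / 1 - -1) with 0 by field.
    rewrite Rabs_R0. unfold Rdiv. lra.
  - change (if (S k =? 0)%nat then -1 else - / 2) with (- / 2).
    destruct (power_sum_defect_bounds k) as [C HC]. exists C. intros N HN.
    assert (HNpos : 0 < INR N) by (apply lt_0_INR; lia).
    assert (Hpow : 0 < INR N ^ k) by (apply pow_lt; lra).
    assert (Hk : 1 <= INR (S (S k))) by (rewrite !S_INR; pose proof (pos_INR k); lra).
    assert (Hden : 0 < 2 * INR (S (S k)) * INR N ^ S k)
      by (apply Rmult_lt_0_compat; [lra | apply pow_lt; lra]).
    set (D := power_sum_defect (S k) N). destruct (HC N) as [HD0 HD1]. fold D in HD0, HD1.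
    replace (power_sum (S k) N / INR N ^ S k - INR N / INR (S (S k)) - - / 2)
      with (D / (2 * INR (S (S k)) * INR N ^ S k))
      by (unfold D, power_sum_defect; simpl pow; field; lra).
    rewrite Rabs_pos_eq by (apply Rdiv_le_0_compat; lra).
    apply Rle_div_l; [exact Hden|].
    unfold Rdiv. simpl pow.
    replace (C * / INR N * (2 * INR (S (S k)) * (INR N * INR N ^ k)))
      with (2 * INR (S (S k)) * (C * INR N ^ k)) by (field; lra).
    assert (0 <= C * INR N ^ k) by lra.
    nra.
Qed.

(** * Sums, limits and series *)

Lemma sum_n_bigO (P : nat -> Prop) (g : nat -> R) (e : nat -> nat -> R) (w : nat -> R) (n : nat) :
  (forall k, exists C, forall N, P N -> Rabs (e k N) <= C * g N) ->
  exists C, forall N, P N -> Rabs (sum_n (fun k => w k * e k N) n) <= C * g N.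
Proof.
  intros He. induction n as [|n [C IH]].
  - destruct (He 0%nat) as [C HC]. exists (Rabs (w 0%nat) * C). intros N HN.
    rewrite sum_O, Rabs_mult, Rmult_assoc.
    apply Rmult_le_compat_l; [apply Rabs_pos | auto].
  - destruct (He (S n)) as [C' HC']. exists (C + Rabs (w (S n)) * C'). intros N HN.
    rewrite sum_n_succ.
    eapply Rle_trans; [apply Rabs_triang|]. rewrite Rabs_mult.
    assert (Rabs (w (S n)) * Rabs (e (S n) N) <= Rabs (w (S n)) * (C' * g N))
      by (apply Rmult_le_compat_l; [apply Rabs_pos | auto]).
    specialize (IH N HN). lra.
Qed.

Lemma eq0_of_abs_le_lim0 (a : R) (u : nat -> R) :
  (forall i, Rabs a <= u i) -> is_lim_seq u 0 -> a = 0.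
Proof.
  intros Hle Hu.
  assert (H : Rbar_le (Rabs a) 0) by (apply (is_lim_seq_le (fun _ => Rabs a) u);
                                     [exact Hle | apply is_lim_seq_const | exact Hu]).
  simpl in H. pose proof (Rabs_pos a).
  apply Rabs_eq_0. lra.
Qed.

Lemma is_lim_seq_div_INR (C : R) : is_lim_seq (fun i => C / INR (S i)) 0.
Proof.
  replace (Finite 0) with (Rbar_mult C 0) by (simpl; now rewrite Rmult_0_r).
  apply is_lim_seq_scal_l, (is_lim_seq_incr_1 (fun n => / INR n)).
  apply (is_lim_seq_inv INR p_infty); [apply is_lim_seq_INR | discriminate].
Qed.

Lemma affine_bigO_inv_const (A B C : R) :
  (forall N, (1 <= N)%nat -> Rabs (A * INR N + B) <= C / INR N) -> B = 0.
Proof.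
  intros H.
  (* B = 2 (A N + B) - (A (2 N) + B) eliminates the linear term. *)
  apply (eq0_of_abs_le_lim0 B (fun i => 3 * C / INR (S i))); [|apply is_lim_seq_div_INR].
  intros i. set (x := INR (S i)).
  assert (Hx : 1 <= x) by (apply (le_INR 1); lia).
  pose proof (H (S i) ltac:(lia)) as H1.
  pose proof (H (2 * S i)%nat ltac:(lia)) as H2.
  fold x in H1. rewrite mult_INR in H2. fold x in H2.
  replace (INR 2) with 2 in H2 by (simpl; ring).
  replace B with (2 * (A * x + B) - (A * (2 * x) + B)) by ring.
  eapply Rle_trans; [apply Rabs_triang|]. rewrite Rabs_Ropp, Rabs_mult, Rabs_pos_eq by lra.
  replace (3 * C / x) with (2 * (C / x) + C / (2 * x) + C / (2 * x)) by (field; lra).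
  assert (0 <= C / (2 * x)) by (eapply Rle_trans; [apply Rabs_pos | exact H2]).
  lra.
Qed.

Lemma sum_inv_sqr_le (n : nat) : sum_n (fun N => / INR N ^ 2) n <= 2 - / INR n.
Proof.
  induction n as [|n IH].
  - rewrite sum_O. simpl. rewrite Rmult_0_l, Rinv_0. lra.
  - rewrite sum_n_succ. destruct n as [|n].
    + rewrite sum_O. simpl. rewrite Rmult_0_l, Rinv_0, Rmult_1_l, Rinv_1. lra.
    + set (x := INR (S n)) in *.
      replace (INR (S (S n))) with (x + 1) by (unfold x; now rewrite (S_INR (S n))).
      assert (Hx : 1 <= x) by (apply (le_INR 1); lia).
      assert (/ (x + 1) ^ 2 <= / x - / (x + 1)).
      { replace (/ x - / (x + 1)) with (/ (x * (x + 1))) by (field; lra).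
        apply Rinv_le_contravar; [nra | simpl; nra]. }
      lra.
Qed.

Lemma ex_series_inv_sqr : ex_series (fun N => / INR N ^ 2).
Proof.
  destruct (ex_finite_lim_seq_incr (sum_n (fun N => / INR N ^ 2)) 2) as [l Hl].
  - intros n. rewrite sum_n_succ.
    assert (0 < INR (S n) ^ 2) by (apply pow_lt, lt_0_INR; lia).
    pose proof (Rinv_0_lt_compat _ H). lra.
  - intros n. pose proof (sum_inv_sqr_le n).
    assert (0 <= / INR n)
      by (destruct n; [simpl; rewrite Rinv_0; lra | apply Rlt_le, Rinv_0_lt_compat, lt_0_INR; lia]).
    lra.
  - exists l. exact Hl.
Qed.

Lemma INR_div_pow_le_inv_sqr (N s : nat) : (3 <= s)%nat -> INR N / INR N ^ s <= / INR N ^ 2.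
Proof.
  intros Hs. destruct N as [|N].
  - simpl. rewrite pow_i by lia. unfold Rdiv. rewrite Rmult_0_l, Rmult_0_l, Rinv_0. lra.
  - set (x := INR (S N)). assert (Hx : 1 <= x) by (apply (le_INR 1); lia).
    pose proof (Rle_pow x 1 (s - 2) Hx ltac:(lia)) as Hp. rewrite pow_1 in Hp.
    replace s with (2 + (s - 2))%nat by lia. rewrite pow_add.
    assert (H2 : 0 < x ^ 2) by (apply pow_lt; lra).
    replace (x / (x ^ 2 * x ^ (s - 2))) with (/ x ^ 2 * (x / x ^ (s - 2)))
      by (field; split; first [lra | apply pow_nonzero; lra]).
    rewrite <- (Rmult_1_r (/ x ^ 2)) at 2.
    apply Rmult_le_compat_l; [apply Rlt_le, Rinv_0_lt_compat; lra|].
    apply Rle_div_l; lra.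
Qed.

Lemma inv_pow_INR_nonneg (N s : nat) : 0 <= / INR N ^ s.
Proof.
  destruct N as [|N].
  - destruct s; simpl; [rewrite Rinv_1 | rewrite Rmult_0_l, Rinv_0]; lra.
  - apply Rlt_le, Rinv_0_lt_compat, pow_lt, lt_0_INR. lia.
Qed.

Lemma linear_bound_nonneg (g : nat -> R) (K : R) :
  (forall N, Rabs (g N) <= K * INR N) -> 0 <= K.
Proof.
  intros Hg. specialize (Hg 1%nat). simpl in Hg. pose proof (Rabs_pos (g 1%nat)). lra.
Qed.

Lemma abs_div_pow_le (g : nat -> R) (K : R) (s : nat) :
  (forall N, Rabs (g N) <= K * INR N) -> (3 <= s)%nat ->
  forall N, Rabs (g N / INR N ^ s) <= K * / INR N ^ 2.
Proof.
  intros Hg Hs N.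
  unfold Rdiv. rewrite Rabs_mult, (Rabs_pos_eq (/ _)) by apply inv_pow_INR_nonneg.
  apply (Rle_trans _ (K * INR N * / INR N ^ s)).
  - apply Rmult_le_compat_r; [apply inv_pow_INR_nonneg | apply Hg].
  - rewrite Rmult_assoc. apply Rmult_le_compat_l; [exact (linear_bound_nonneg g K Hg)|].
    now apply INR_div_pow_le_inv_sqr.
Qed.

Lemma ex_series_Rabs_le (a b : nat -> R) :
  (forall N, Rabs (a N) <= b N) -> ex_series b -> ex_series a.
Proof. intros Hab Hb. exact (ex_series_le a b Hab Hb). Qed.

Lemma ex_series_div_pow (g : nat -> R) (K : R) (s : nat) :
  (forall N, Rabs (g N) <= K * INR N) -> (3 <= s)%nat ->
  ex_series (fun N => g N / INR N ^ s).
Proof.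
  intros Hg Hs.
  apply (ex_series_Rabs_le _ (fun N => K * / INR N ^ 2)).
  - intros N. apply (abs_div_pow_le g K s Hg Hs).
  - apply (ex_series_scal_l K (fun N => / INR N ^ 2)), ex_series_inv_sqr.
Qed.

Lemma ex_series_sum_n (u : nat -> nat -> R) (n : nat) :
  (forall k, ex_series (u k)) -> ex_series (fun N => sum_n (fun k => u k N) n).
Proof.
  intros Hu. induction n as [|n IH].
  - apply (ex_series_ext (u 0%nat)); [intros N; now rewrite sum_O | apply Hu].
  - apply (ex_series_ext (fun N => plus (sum_n (fun k => u k N) n) (u (S n) N))).
    + intros N. now rewrite sum_Sn.
    + exact (ex_series_plus _ (u (S n)) IH (Hu (S n))).
Qed.

Lemma Series_sum_n (u : nat -> nat -> R) (n : nat) :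
  (forall k, ex_series (u k)) ->
  Series (fun N => sum_n (fun k => u k N) n) = sum_n (fun k => Series (u k)) n.
Proof.
  intros Hu. induction n as [|n IH].
  - rewrite sum_O. apply Series_ext. intros N. now rewrite sum_O.
  - rewrite sum_n_succ, <- IH, <- Series_plus; [| now apply ex_series_sum_n | apply Hu].
    apply Series_ext. intros N. apply sum_n_succ.
Qed.

Lemma abs_first_term_le (a b : nat -> R) (M : nat) :
  (forall N, (N < M)%nat -> a N = 0) -> Series a = 0 ->
  (forall N, (M < N)%nat -> Rabs (a N) <= b N) -> (forall N, 0 <= b N) -> ex_series b ->
  Rabs (a M) <= Series b.
Proof.
  intros Hbelow Ha Habove Hb0 Hb.
  set (tail := fun k => a (M + S k)%nat).
  assert (Htail : forall k, Rabs (tail k) <= b (S M + k)%nat)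
    by (intros k; replace (S M + k)%nat with (M + S k)%nat by lia; apply Habove; lia).
  assert (Hbtail : ex_series (fun k => b (S M + k)%nat)) by now apply ex_series_incr_n.
  assert (Habs : ex_series (fun k => Rabs (tail k))).
  { apply (ex_series_Rabs_le _ (fun k => b (S M + k)%nat)); [|exact Hbtail].
    intros k. rewrite Rabs_Rabsolu. apply Htail. }
  assert (Hsplit : Series a = a M + Series tail).
  { rewrite (Series_incr_n_aux a M Hbelow), Series_incr_1.
    - rewrite Nat.add_0_r. reflexivity.
    - apply ex_series_incr_1, ex_series_Rabs, Habs. }
  assert (HaM : a M = - Series tail) by lra.
  rewrite HaM, Rabs_Ropp.
  apply (Rle_trans _ _ _ (Series_Rabs _ Habs)).
  apply (Rle_trans _ (Series (fun k => b (S M + k)%nat))).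
  - apply Series_le; [|exact Hbtail]. intros k. split; [apply Rabs_pos | apply Htail].
  - rewrite (Series_incr_n b (S M)) by (lia || exact Hb).
    pose proof (cond_pos_sum b M Hb0). simpl Init.Nat.pred. lra.
Qed.

(** * Uniqueness of Dirichlet coefficients *)

Lemma ratio_pow_le (x y : R) (i : nat) : 1 <= x -> x + 1 <= y ->
  y * (x / y) ^ (i + 3) <= x ^ 3 * (x / (x + 1)) ^ i * / y ^ 2.
Proof.
  intros Hx Hy.
  replace (y * (x / y) ^ (i + 3)) with ((x / y) ^ i * (x ^ 3 * / y ^ 2))
    by (rewrite pow_add; unfold Rdiv; rewrite !Rpow_mult_distr, <- !pow_inv; simpl; field; lra).
  replace (x ^ 3 * (x / (x + 1)) ^ i * / y ^ 2) with ((x / (x + 1)) ^ i * (x ^ 3 * / y ^ 2)) by ring.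
  apply Rmult_le_compat_r.
  - apply Rmult_le_pos; [apply pow_le; lra | apply Rlt_le, Rinv_0_lt_compat, pow_lt; lra].
  - apply pow_incr. split; [apply Rdiv_le_0_compat; lra|].
    apply Rmult_le_compat_l; [lra|]. apply Rinv_le_contravar; lra.
Qed.

Lemma dirichlet_coeffs_zero (f : nat -> R) (K : R) :
  f 0%nat = 0 -> (forall N, Rabs (f N) <= K * INR N) ->
  (forall s, (3 <= s)%nat -> Series (fun N => f N / INR N ^ s) = 0) ->
  forall N, f N = 0.
Proof.
  intros Hf0 Hbound Hseries M.
  induction M as [M IH] using (well_founded_induction lt_wf).
  destruct M as [|M']; [exact Hf0|]. set (M := S M') in *.
  set (x := INR M). assert (Hx : 1 <= x) by (apply (le_INR 1); unfold M; lia).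
  set (q := x / (x + 1)).
  assert (Hq : 0 <= q < 1) by (unfold q; split; [apply Rdiv_le_0_compat | apply Rlt_div_l]; lra).
  pose proof (linear_bound_nonneg f K Hbound) as HK.
  set (Z := Series (fun N => / INR N ^ 2)).
  (* After scaling by M ^ s, the first possibly nonzero coefficient f M is
     bounded by a tail that decays like (M / (M + 1)) ^ s. *)
  apply (eq0_of_abs_le_lim0 _ (fun i => K * x ^ 3 * Z * q ^ i)).
  2: { replace (Finite 0) with (Rbar_mult (K * x ^ 3 * Z) 0) by (simpl; now rewrite Rmult_0_r).
       apply is_lim_seq_scal_l, is_lim_seq_geom. rewrite Rabs_pos_eq; lra. }
  intros i.
  set (a := fun N => f N * (x / INR N) ^ (i + 3)).
  set (b := fun N => K * x ^ 3 * q ^ i * / INR N ^ 2).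
  assert (HaM : a M = f M) by (unfold a; fold x; rewrite Rdiv_diag, pow1 by lra; ring).
  assert (Ha : Series a = 0).
  { rewrite <- (Rmult_0_r (x ^ (i + 3))), <- (Hseries (i + 3)%nat), <- Series_scal_l by lia.
    apply Series_ext. intros N. unfold a. unfold Rdiv. rewrite Rpow_mult_distr, <- pow_inv. ring. }
  replace (K * x ^ 3 * Z * q ^ i) with (Series b)
    by (unfold b, Z; rewrite Series_scal_l; ring).
  rewrite <- HaM. apply abs_first_term_le.
  - intros N HN. unfold a. rewrite (IH N HN). ring.
  - exact Ha.
  - intros N HN. unfold a, b.
    assert (Hy : x + 1 <= INR N) by (unfold x; rewrite <- S_INR; apply le_INR; lia).
    rewrite Rabs_mult, (Rabs_pos_eq (_ ^ _)) by (apply pow_le, Rdiv_le_0_compat; lra).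
    apply (Rle_trans _ (K * (INR N * (x / INR N) ^ (i + 3)))).
    + rewrite <- Rmult_assoc. apply Rmult_le_compat_r; [apply pow_le, Rdiv_le_0_compat; lra | apply Hbound].
    + replace (K * x ^ 3 * q ^ i * / INR N ^ 2) with (K * (x ^ 3 * q ^ i * / INR N ^ 2)) by ring.
      apply Rmult_le_compat_l; [exact HK | now apply ratio_pow_le].
  - intros N. unfold b.
    assert (0 <= x ^ 3 * q ^ i) by (apply Rmult_le_pos; apply pow_le; lra).
    pose proof (inv_pow_INR_nonneg N 2). apply Rmult_le_pos; [nra | assumption].
  - apply (ex_series_scal_l (K * x ^ 3 * q ^ i) (fun N => / INR N ^ 2)), ex_series_inv_sqr.
Qed.

(** * Weighted Dirichlet series of power sums *)

Definition dzeta_real (k s : nat) : R := Series (fun N => power_sum_ratio k N / INR N ^ s).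

Lemma Series_weighted_power_sum_ratio (w : nat -> R) (n s : nat) : (3 <= s)%nat ->
  Series (fun N => sum_n (fun k => w k * power_sum_ratio k N) n / INR N ^ s)
  = sum_n (fun k => w k * dzeta_real k s) n.
Proof.
  intros Hs. unfold dzeta_real.
  erewrite sum_n_ext by (intros k; now rewrite <- Series_scal_l).
  rewrite <- Series_sum_n.
  - apply Series_ext. intros N. unfold Rdiv.
    rewrite <- (sum_n_mult_r (K := R_Ring)). apply sum_n_ext. intros k.
    unfold mult. simpl. ring.
  - intros k. apply (ex_series_scal_l (w k) (fun N => power_sum_ratio k N / INR N ^ s)).
    apply (ex_series_div_pow _ 1); [|exact Hs].
    intros N. rewrite Rmult_1_l, Rabs_pos_eq; apply power_sum_ratio_bounds.
Qed.

Lemma weighted_dzeta_real_eq0 (w : nat -> R) (n : nat) :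
  (forall s, (3 <= s)%nat -> sum_n (fun k => w k * dzeta_real k s) n = 0) ->
  sum_n (fun k => w k * power_sum_const k) n = 0.
Proof.
  intros Hw.
  set (A := sum_n (fun k => w k / INR (S k)) n).
  set (B := sum_n (fun k => w k * power_sum_const k) n).
  set (F := fun N => sum_n (fun k => w k * power_sum_ratio k N) n).
  assert (Hexpand : forall N, F N + - A * INR N + - B
    = sum_n (fun k => w k * (power_sum_ratio k N - INR N / INR (S k) - power_sum_const k)) n).
  { intros N. unfold F, A, B. clear. induction n as [|n IH].
    - rewrite !sum_O. unfold Rdiv. ring.
    - rewrite !sum_n_succ, <- IH. unfold Rdiv. ring. }
  destruct (sum_n_bigO (fun _ => True) INR power_sum_ratio w n) as [K HK].
  { intros k. exists 1. intros N _. rewrite Rmult_1_l, Rabs_pos_eq; apply power_sum_ratio_bounds. }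
  assert (HF : forall N, F N = 0).
  { apply (dirichlet_coeffs_zero F K).
    - apply Rabs_eq_0, Rle_antisym; [|apply Rabs_pos].
      rewrite <- (Rmult_0_r K). now apply HK.
    - intros N. now apply HK.
    - intros s Hs. rewrite <- (Hw s Hs). now apply Series_weighted_power_sum_ratio. }
  destruct (sum_n_bigO (fun N => (1 <= N)%nat) (fun N => / INR N)
              (fun k N => power_sum_ratio k N - INR N / INR (S k) - power_sum_const k) w n)
    as [C HC].
  { intros k. exact (power_sum_asymptotic k). }
  enough (- B = 0) by lra.
  apply (affine_bigO_inv_const (- A) (- B) C). intros N HN.
  specialize (HC N HN). rewrite <- Hexpand, HF, Rplus_0_l in HC. exact HC.
Qed.

Definition term_weight (k : nat) : R := if (1 <=? k)%nat then 1 else / 2.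

Lemma sum_term_weight_const (r : nat -> R) (n : nat) :
  - sum_n r n / 2 = sum_n (fun k => r k * term_weight k * power_sum_const k) n.
Proof.
  assert (Hk : forall k, term_weight k * power_sum_const k = - / 2)
    by (intros [|k]; unfold term_weight, power_sum_const; simpl; field).
  induction n as [|n IH].
  - rewrite !sum_O, Rmult_assoc, Hk. field.
  - rewrite !sum_n_succ, <- IH, Rmult_assoc, Hk. field.
Qed.

Lemma sum_weighted_dzeta_real_eq0 (r : nat -> R) (n : nat) :
  (forall s, (3 <= s)%nat -> sum_n (fun k => r k * (term_weight k * dzeta_real k s)) n = 0) ->
  sum_n r n = 0.
Proof.
  intros Hr. pose proof (sum_term_weight_const r n) as Hconst.
  rewrite (weighted_dzeta_real_eq0 (fun k => r k * term_weight k)) in Hconst; [lra|].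
  intros s Hs. rewrite <- (Hr s Hs). apply sum_n_ext. intros k. apply Rmult_assoc.
Qed.

(** * Complex coefficients and the double zeta function at integers *)

Lemma sum_n_RtoC (a : nat -> R) (n : nat) : sum_n (fun k => RtoC (a k)) n = RtoC (sum_n a n).
Proof.
  induction n as [|n IH]; [now rewrite !sum_O|].
  rewrite !sum_Sn, IH. symmetry. apply RtoC_plus.
Qed.

Lemma sum_n_succ_C (a : nat -> C) (n : nat) : sum_n a (S n) = Cplus (sum_n a n) (a (S n)).
Proof. now rewrite sum_Sn. Qed.

Lemma re_sum_n (f : nat -> C) (n : nat) : Re (sum_n f n) = sum_n (fun k => Re (f k)) n.
Proof. induction n as [|n IH]; [now rewrite !sum_O | rewrite !sum_Sn, <- IH; reflexivity]. Qed.

Lemma im_sum_n (f : nat -> C) (n : nat) : Im (sum_n f n) = sum_n (fun k => Im (f k)) n.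
Proof. induction n as [|n IH]; [now rewrite !sum_O | rewrite !sum_Sn, <- IH; reflexivity]. Qed.

Lemma re_sum_n_scal (c : nat -> C) (x : nat -> R) (n : nat) :
  Re (sum_n (fun k => Cmult (c k) (RtoC (x k))) n) = sum_n (fun k => Re (c k) * x k) n.
Proof. rewrite re_sum_n. apply sum_n_ext. intros k. apply re_scal_r. Qed.

Lemma im_sum_n_scal (c : nat -> C) (x : nat -> R) (n : nat) :
  Im (sum_n (fun k => Cmult (c k) (RtoC (x k))) n) = sum_n (fun k => Im (c k) * x k) n.
Proof. rewrite im_sum_n. apply sum_n_ext. intros k. apply im_scal_r. Qed.

Lemma npow_neg_nat (N p : nat) : (1 <= N)%nat -> npow_neg N (RtoC (INR p)) = RtoC (/ INR N ^ p).
Proof.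
  intros HN. unfold npow_neg, RtoC, Re, Im. simpl.
  replace (- 0 * ln (INR N)) with 0 by ring. rewrite cos_0, sin_0.
  replace (- INR p * ln (INR N)) with (- (INR p * ln (INR N))) by ring.
  rewrite exp_Ropp. change (exp (INR p * ln (INR N))) with (Rpower (INR N) (INR p)).
  rewrite Rpower_pow by (apply lt_0_INR; lia). f_equal; ring.
Qed.

Lemma dz_term_nat (k s N : nat) :
  dz_term k (RtoC (INR s)) N = RtoC (power_sum_ratio k N / INR N ^ s).
Proof.
  unfold dz_term.
  replace (sum_n _ (N - 1)) with (RtoC (power_sum k N)).
  2: { unfold power_sum. rewrite <- sum_n_RtoC. apply sum_n_ext. intros j. now destruct (1 <=? j)%nat. }
  destruct N as [|N].
  - unfold power_sum_ratio. rewrite power_sum_N0, Cmult_0_l. unfold Rdiv. now rewrite !Rmult_0_l.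
  - rewrite <- RtoC_plus, <- plus_INR, npow_neg_nat by lia. rewrite <- RtoC_mult. f_equal.
    assert (0 < INR (S N)) by (apply lt_0_INR; lia).
    unfold power_sum_ratio. rewrite pow_add. field. split; apply pow_nonzero; lra.
Qed.

Lemma dzeta_nat (k s : nat) : dzeta k (RtoC (INR s)) = RtoC (dzeta_real k s).
Proof.
  unfold dzeta, CSeries, dzeta_real.
  rewrite (Series_ext _ (fun N => power_sum_ratio k N / INR N ^ s))
    by (intros N; cbv beta; now rewrite dz_term_nat).
  rewrite (Series_ext (fun N => Im (dz_term k (RtoC (INR s)) N)) (fun N => 0 * 0))
    by (intros N; rewrite dz_term_nat; simpl; ring).
  rewrite Series_scal_l, Rmult_0_l. reflexivity.
Qed.

Lemma halved_first_term_sum (c z : nat -> C) (n : nat) :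
  Cplus (sum_n (fun k => if (1 <=? k)%nat then Cmult (c k) (z k) else RtoC 0) n)
        (Cdiv (Cmult (c 0%nat) (z 0%nat)) (RtoC 2))
  = sum_n (fun k => Cmult (c k) (Cmult (RtoC (term_weight k)) (z k))) n.
Proof.
  induction n as [|n IH].
  - rewrite !sum_O. unfold term_weight, Cdiv. simpl.
    rewrite (RtoC_inv 2) by lra. ring.
  - rewrite !sum_n_succ_C, <- IH.
    change (term_weight (S n)) with 1. change (1 <=? S n)%nat with true. cbv iota.
    ring.
Qed.

Theorem corollary5p2 (m : nat) (hm : (0 < m)%nat) (c : nat -> Complex.C) :
  (forall s : Complex.C, 2 < Re s ->
     Cplus (sum_n (fun k => if (1 <=? k)%nat then Cmult (c k) (dzeta k s) else RtoC 0)
                  (2 * m + 1))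
           (Cdiv (Cmult (c 0%nat) (dzeta 0 s)) (RtoC 2)) = RtoC 0) ->
  sum_n c (2 * m + 1) = RtoC 0.
Proof.
  intros Hc. set (n := (2 * m + 1)%nat) in *.
  assert (Hs : forall s, (3 <= s)%nat ->
            sum_n (fun k => Cmult (c k) (RtoC (term_weight k * dzeta_real k s))) n = RtoC 0).
  { intros s Hs. rewrite <- (Hc (RtoC (INR s))).
    - rewrite halved_first_term_sum. apply sum_n_ext. intros k. now rewrite dzeta_nat, RtoC_mult.
    - apply (lt_INR 2). lia. }
  apply injective_projections.
  - etransitivity; [apply re_sum_n|]. apply sum_weighted_dzeta_real_eq0.
    intros s Hs'. rewrite <- re_sum_n_scal, (Hs s Hs'). reflexivity.
  - etransitivity; [apply im_sum_n|]. apply sum_weighted_dzeta_real_eq0.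
    intros s Hs'. rewrite <- im_sum_n_scal, (Hs s Hs'). reflexivity.
Qed.
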